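(* Fix $k\in\mathbb{Z}_{\geq 0}$ and $X\in\{U,V\}$. For all integers $r$ and $i$: 1. $X_i^r$ is the disjoint union of the sets $X^r_{i,wc}$, $X^r_{i,\overline{wc},\mathrm{left}}$ and $X^r_{i,\overline{wc},\mathrm{right}}$. 2. There is a bijection between $X^r_{i,\overline{wc},\mathrm{right}}$ and $X^r_{i-1,\overline{wc},\mathrm{left}}$ which preserves the value of a word in $\mathcal{A}_k$ (i.e. a word and its image are equal as elements of $\mathcal{A}_k$). 3. The sets $X^r_{0,\overline{wc},\mathrm{right}}$, $V^r_{r-1,\overline{wc},\mathrm{left}}$, $U^r_{r-2,\overline{wc},\mathrm{left}}$, and $X^r_i$ for $i<0$, are empty.
   Context: Indices are elements of $\mathbb{Z}/(k+1)\mathbb{Z}$, identified with $[0,k]=\{0,\dots,k\}$. $\mathcal{A}_k$ is the associative $\mathbb{Z}$-algebra with generators $A_0,\dots,A_k$ subject only to $A_iA_{i+1}A_i=A_{i+1}A_iA_{i+1}$ for all $i$ and $A_iA_j=A_jA_i$ whenever $i-j\not\equiv\pm1 \pmod{k+1}$ (no relation is imposed on $A_i^2$). A word is a finite sequence $(i_1,\dots,i_m)$ of indices, written $A_{i_1\dots i_m}$; its value is $A_{i_1}\cdots A_{i_m}\in\mathcal{A}_k$, its weak length is $\widetilde{l}=m$, and its support $supp$ is the set $\{i_1,\dots,i_m\}$. For a proper subset $S\subsetneq[0,k]$, let $a$ be the smallest element of $[0,k]$ not in $S$; the canonical cyclic interval $I_S$ is the total order $a+1<a+2<\dots<k<0<1<\dots<a-1$.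 A word $u=A_{i_1\dots i_m}$ with $supp(u)$ a proper subset of $[0,k]$ is a weak hook word if, with respect to $I_{supp(u)}$, for some $j$ either (a) $i_1>\dots>i_j<i_{j+1}<\dots<i_m$ (hook type $V$; left side = letters $i_1,\dots,i_j$, right side = letters $i_j,\dots,i_m$), or (b) $i_1>\dots>i_j=i_{j+1}<\dots<i_m$ (hook type $U$; left side = $i_1,\dots,i_j$, right side = $i_{j+1},\dots,i_m$). $asc(u)$ is the number of $t$ with $i_t<i_{t+1}$ in $I_{supp(u)}$. The word $u$ is $k$-connected if $supp(u)$ is an interval of $I_{supp(u)}$. Otherwise, consider all pairs of letters $a<c$ of $u$ (in $I_{supp(u)}$) with $a\not\equiv c-1\pmod{k+1}$ and no letter $b$ of $u$ with $a<b<c$; let $u_{min}$ be the smallest such $c$; it occurs once or twice in $u$ (if twice, then once on each side). $u$ is $k$-weak connected if it is $k$-connected or $u_{min}$ occurs twice (on both sides). For $X\in\{U,V\}$: $X^r_i$ is the set of weak hook words of hook type $X$, weak length $r$ and $asc=i$; $X^r_{i,wc}$ is the subset of $k$-weak connected ones; $X^r_{i,\overline{wc},\mathrm{left}}$ (resp. $X^r_{i,\overline{wc},\mathrm{right}}$) is the subset of words that are not $k$-weak connected and whose unique occurrence of $u_{min}$ is on the left (resp. right) side. *)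

From HB Require Import structures.
From mathcomp Require Import all_boot all_order all_algebra.
Set Implicit Arguments. Unset Strict Implicit. Unset Printing Implicit Defensive.
Import Order.TTheory GRing.Theory Num.Theory.

(* Indices are 'I_k.+1, i.e. Z/(k+1)Z identified with [0,k]. *)
Definition word (k : nat) := seq 'I_k.+1.

Definition proper_supp k (u : word k) : bool := [exists x : 'I_k.+1, x \notin u].

Definition gap_pt k (u : word k) : nat :=
  find (fun n => n \notin map val u) (iota 0 k.+1).

(* position of x in the canonical cyclic interval I_{supp u}:
   a+1 < a+2 < ... < k < 0 < ... < a-1  (ranks 0,1,...) *)
Definition rank k (u : word k) (x : 'I_k.+1) : nat :=
  (val x + k - gap_pt u) %% k.+1.

Definition ltI k (u : word k) (x y : 'I_k.+1) : bool := rank u x < rank u y.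

Inductive htype := HU | HV.

(* u is a hook of the given type with turning index j (1-based), i.e.
   V : i_1 > ... > i_j < i_{j+1} < ... < i_m
   U : i_1 > ... > i_j = i_{j+1} < ... < i_m   (w.r.t. I_{supp u}) *)
Definition hook_at k (X : htype) (u : word k) (j : nat) : bool :=
  match X with
  | HV => [&& 0 < j <= size u,
             sorted (fun x y => ltI u y x) (take j u)
           & sorted (ltI u) (drop j.-1 u)]
  | HU => [&& 0 < j < size u,
             sorted (fun x y => ltI u y x) (take j u),
             nth ord0 u j.-1 == nth ord0 u j
           & sorted (ltI u) (drop j u)]
  end.

Definition left_side k (u : word k) (j : nat) : word k := take j u.
Definition right_side k (X : htype) (u : word k) (j : nat) : word k :=
  match X with HV => drop j.-1 u | HU => drop j u end.

Definition weak_hook k (X : htype) (u : word k) : Prop :=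
  proper_supp u /\ exists j, hook_at X u j.

Definition asc k (u : word k) : nat :=
  count (fun p => ltI u p.1 p.2) (zip u (behead u)).

Definition kconnected k (u : word k) : bool :=
  [forall x : 'I_k.+1, forall y : 'I_k.+1, forall z : 'I_k.+1,
     [&& x \in u, z \in u, ltI u x y & ltI u y z] ==> (y \in u)].

Definition gap_top k (u : word k) (c : 'I_k.+1) : bool :=
  (c \in u) &&
  [exists a : 'I_k.+1,
     [&& a \in u, ltI u a c, val c != (val a).+1 %% k.+1
       & [forall b : 'I_k.+1, (b \in u) ==> ~~ (ltI u a b && ltI u b c)]]].

Definition is_umin k (u : word k) (c : 'I_k.+1) : bool :=
  gap_top u c && [forall c' : 'I_k.+1, gap_top u c' ==> (rank u c <= rank u c')].

Definition kweak_connected k (u : word k) : Prop :=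
  kconnected u \/ exists c, is_umin u c /\ count_mem c u = 2.

Definition Xset k (X : htype) (r : nat) (i : int) (u : word k) : Prop :=
  [/\ size u = r, weak_hook X u & Posz (asc u) = i].

Definition Xwc k X r i (u : word k) : Prop := Xset X r i u /\ kweak_connected u.

Definition Xleft k X r i (u : word k) : Prop :=
  [/\ Xset X r i u, ~ kweak_connected u &
      exists c j, [/\ is_umin u c, hook_at X u j & c \in left_side u j]].

Definition Xright k X r i (u : word k) : Prop :=
  [/\ Xset X r i u, ~ kweak_connected u &
      exists c j, [/\ is_umin u c, hook_at X u j & c \in right_side X u j]].

Definition Ak_rels k (R : nzRingType) (a : 'I_k.+1 -> R) : Prop :=
  (forall i : 'I_k.+1,
      (a i * a (ordS i) * a i = a (ordS i) * a i * a (ordS i))%R) /\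
  (forall i j : 'I_k.+1, j != ordS i -> i != ordS j ->
      (a i * a j = a j * a i)%R).

(* Two words have the same value in A_k (the Z-algebra presented by the
   generators A_0..A_k and the relations above): by the universal property of
   the presented algebra, this means their products agree in every ring
   with elements satisfying the relations. *)
Definition Ak_eq k (u v : word k) : Prop :=
  forall (R : nzRingType) (a : 'I_k.+1 -> R), Ak_rels a ->
    (\prod_(x <- u) a x = \prod_(x <- v) a x)%R.

From mathcomp Require Import all_boot all_order all_algebra.
From mathcomp Require Import zify.
Import Order.TTheory GRing.Theory Num.Theory.

Set Implicit Arguments. Unset Strict Implicit. Unset Printing Implicit Defensive.

(* A weak hook word is L ++ m :: R (type V) or L ++ m :: m :: R (type U), where, in the
   order of I_supp(u), rcons L m is strictly decreasing and m :: R strictly increasing; its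
   ascents are exactly the size R steps of m :: R.  If u is not k-weak connected, u_min = c
   lies above m and occurs exactly once, either in L or in R.  Removing c from R and inserting
   it at its sorted place in L, or conversely, keeps the hook shape and changes size R, hence
   asc, by one; the two moves are mutually inverse.  The value in A_k is preserved because c
   only crosses letters below it in I_supp(u), and by the definition of u_min none of these
   is adjacent to c modulo k+1, so each of them commutes with c. *)

Lemma rem_cat (T : eqType) (x : T) s1 s2 :
  rem x (s1 ++ s2) = if x \in s1 then rem x s1 ++ s2 else s1 ++ rem x s2.
Proof.
elim: s1 => [|y s1 IH] //=; rewrite inE eq_sym IH.
by case: eqP => [->|_] //=; case: ifP.
Qed.

Lemma prod_comm_cat (S : pzSemiRingType) (I : eqType) (f : I -> S) c (A B C : seq I) :
  {in B, forall x, GRing.comm (f c) (f x)} ->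
  (\prod_(x <- A ++ c :: B ++ C) f x = \prod_(x <- A ++ B ++ c :: C) f x)%R.
Proof.
move=> cB; rewrite !big_cat /= !big_cons !big_cat /=.
have cBp : GRing.comm (f c) (\prod_(x <- B) f x)%R.
  by rewrite big_seq_cond; apply: commr_prod => x /andP [xB _]; apply: cB.
by congr (_ * _)%R; rewrite mulrA cBp -mulrA.
Qed.

Section RankedSeq.
Variables (T : eqType) (rho : T -> nat).
Implicit Types (c x y m : T) (s L R : seq T).

Definition lt_by : rel T := fun x y => rho x < rho y.
Definition gt_by : rel T := fun x y => rho y < rho x.

Lemma lt_by_trans : transitive lt_by. Proof. by move=> y x z; apply: ltn_trans. Qed.
Lemma gt_by_trans : transitive gt_by. Proof. by move=> y x z /[swap]; apply: ltn_trans. Qed.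
Lemma lt_by_irr : irreflexive lt_by. Proof. by move=> x; apply: ltnn. Qed.
Lemma gt_by_irr : irreflexive gt_by. Proof. by move=> x; apply: ltnn. Qed.

Definition desc_insert c s :=
  let n := find (gt_by c) s in take n s ++ c :: drop n s.
Definition asc_insert c s := rev (desc_insert c (rev s)).

Lemma desc_insert_cons c x s :
  desc_insert c (x :: s) = if rho x < rho c then c :: x :: s else x :: desc_insert c s.
Proof. by rewrite /desc_insert /= {1 2}/gt_by; case: ifP. Qed.

Lemma desc_insert_cat_lt c s1 y s2 : rho y < rho c ->
  desc_insert c (s1 ++ y :: s2) = desc_insert c s1 ++ y :: s2.
Proof.
move=> yc; elim: s1 => [|x s1 IH]; first by rewrite desc_insert_cons yc.
by rewrite cat_cons !desc_insert_cons IH; case: ifP.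
Qed.

Lemma asc_insert_cat_lt c s1 y s2 : rho y < rho c ->
  asc_insert c (s1 ++ y :: s2) = s1 ++ y :: asc_insert c s2.
Proof.
move=> yc; rewrite /asc_insert rev_cat rev_cons cat_rcons desc_insert_cat_lt //.
by rewrite rev_cat rev_cons revK cat_rcons.
Qed.

Lemma perm_desc_insert c s : perm_eq (desc_insert c s) (c :: s).
Proof. by rewrite /desc_insert -cat1s perm_catCA cat_take_drop. Qed.

Lemma perm_asc_insert c s : perm_eq (asc_insert c s) (c :: s).
Proof.
rewrite /asc_insert perm_rev (perm_trans (perm_desc_insert c _)) //.
by rewrite perm_cons perm_rev.
Qed.

Lemma mem_desc_insert c s : c \in desc_insert c s.
Proof. by rewrite (perm_mem (perm_desc_insert c s)) mem_head. Qed.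

Lemma mem_asc_insert c s : c \in asc_insert c s.
Proof. by rewrite (perm_mem (perm_asc_insert c s)) mem_head. Qed.

Lemma rem_desc_insert c s : c \notin s -> rem c (desc_insert c s) = s.
Proof.
move=> cs; rewrite /desc_insert rem_cat (negbTE (contra (@mem_take _ _ _ _) cs)).
by rewrite rem_cons eqxx cat_take_drop.
Qed.

Lemma rem_asc_insert c s : c \notin s -> rem c (asc_insert c s) = s.
Proof.
rewrite -mem_rev /asc_insert /desc_insert => cs.
rewrite rev_cat rev_cons cat_rcons rem_cat mem_rev.
rewrite (negbTE (contra (@mem_drop _ _ _ _) cs)) rem_cons eqxx.
by rewrite -rev_cat cat_take_drop revK.
Qed.

Hypothesis rho_inj : injective rho.

Lemma sorted_desc_insert c s :
  c \notin s -> sorted gt_by s -> sorted gt_by (desc_insert c s).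
Proof.
elim: s => [|x s IH] //= /[!inE] /norP [cx cs] xs.
rewrite desc_insert_cons; case: ifP => [xc|/negbT]; first by rewrite /= {1}/gt_by xc.
rewrite -leqNgt leq_eqVlt (inj_eq rho_inj) (negbTE cx) /= => cx'.
rewrite /= (path_sortedE gt_by_trans) (perm_all _ (perm_desc_insert c s)) /=.
move: xs; rewrite (path_sortedE gt_by_trans) => /andP [-> xs].
by rewrite IH // !andbT; exact: cx'.
Qed.

Lemma sorted_asc_insert c s :
  c \notin s -> sorted lt_by s -> sorted lt_by (asc_insert c s).
Proof.
move=> cs ss; rewrite /asc_insert rev_sorted.
by apply: sorted_desc_insert; rewrite ?mem_rev ?rev_sorted.
Qed.

Lemma desc_insert_rem c s : c \in s -> sorted gt_by s -> desc_insert c (rem c s) = s.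
Proof.
move=> cs ss; have us := sorted_uniq gt_by_trans gt_by_irr ss.
apply: (irr_sorted_eq gt_by_trans gt_by_irr) => //.
  by rewrite sorted_desc_insert ?mem_rem_uniqF ?(subseq_sorted gt_by_trans (rem_subseq c s)).
apply: perm_mem; apply: perm_trans (perm_desc_insert c _) _.
by rewrite perm_sym perm_to_rem.
Qed.

Lemma asc_insert_rem c s : c \in s -> sorted lt_by s -> asc_insert c (rem c s) = s.
Proof.
move=> cs ss; have us := sorted_uniq lt_by_trans lt_by_irr ss.
apply: (irr_sorted_eq lt_by_trans lt_by_irr) => //.
  by rewrite sorted_asc_insert ?mem_rem_uniqF ?(subseq_sorted lt_by_trans (rem_subseq c s)).
apply: perm_mem; apply: perm_trans (perm_asc_insert c _) _.
by rewrite perm_sym perm_to_rem.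
Qed.

Lemma drop_find_lt c L x : sorted gt_by L ->
  x \in drop (find (gt_by c) L) L -> rho x < rho c.
Proof.
elim: L => [|y L IH] //= yL; case: ifP => [yc|_]; last exact: IH (path_sorted yL).
rewrite drop0 inE => /predU1P [-> //|xL].
have /allP/(_ x xL) xy := order_path_min gt_by_trans yL.
exact: ltn_trans xy yc.
Qed.

(* For both hook types the left side is rcons L m and the right side is m :: R. *)
Definition hook_word (X : htype) L m R := L ++ m :: (if X is HU then m :: R else R).
Definition hook_shape L m R := sorted gt_by (rcons L m) && sorted lt_by (m :: R).

Definition move_left c s := desc_insert c (rem c s).
Definition move_right c s := asc_insert c (rem c s).

Definition ascents s := count (fun p => rho p.1 < rho p.2) (zip s (behead s)).

Section HookShape.
Variables (X : htype) (L R : seq T) (m : T).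
Hypothesis shapeLR : hook_shape L m R.

Lemma hook_shape_sorted : sorted gt_by L /\ sorted lt_by R.
Proof.
have [sL sR] := andP shapeLR; split; last exact: path_sorted sR.
exact: (subseq_sorted gt_by_trans (subseq_rcons L m) sL).
Qed.

Lemma hook_shape_uniq : [/\ m \notin L, uniq L & uniq R].
Proof.
have [sL sR] := andP shapeLR.
have /andP [mL uL] : (m \notin L) && uniq L.
  by rewrite -rcons_uniq (sorted_uniq gt_by_trans gt_by_irr).
by have /andP [_ uR] := sorted_uniq lt_by_trans lt_by_irr sR.
Qed.

Lemma hook_shape_lt : {in L ++ R, forall x, rho m < rho x}.
Proof.
have [sL sR] := andP shapeLR.
have sL' : sorted lt_by (m :: rev L) by rewrite -rev_rcons rev_sorted.
move=> x; rewrite mem_cat -mem_rev => /orP [] x_in.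
  exact: (allP (order_path_min lt_by_trans sL')).
exact: (allP (order_path_min lt_by_trans sR)).
Qed.

Lemma hook_shape_min x : x \in hook_word X L m R -> rho m <= rho x.
Proof.
have mem_hook : (x \in hook_word X L m R) = (x == m) || (x \in L ++ R).
  by rewrite /hook_word !mem_cat inE; case: X; rewrite ?inE; case: (x == m); case: (x \in L).
by rewrite mem_hook => /predU1P [->|/hook_shape_lt/ltnW].
Qed.

Lemma count_hook_word c : c != m ->
  count_mem c (hook_word X L m R) = (c \in L) + (c \in R).
Proof.
have [_ uL uR] := hook_shape_uniq; rewrite eq_sym => /negbTE mc.
rewrite /hook_word count_cat /= mc -!count_uniq_mem //.
by case: X => /=; rewrite ?mc.
Qed.

Lemma ascents_hook_word : ascents (hook_word X L m R) = size R.
Proof.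
have [sL sR] := andP shapeLR.
have ascents_desc L' s :
    sorted gt_by (rcons L' m) -> ascents (L' ++ m :: s) = ascents (m :: s).
  elim: L' => [|x L' IH] //= xL; rewrite -IH ?(path_sorted xL) //.
  by case: L' {IH} xL => [|y L'] /= /andP [xy _]; rewrite /ascents /= leqNgt ltnW.
have ascents_asc y s : path lt_by y s -> ascents (y :: s) = size s.
  elim: s y => [|z s IH] y //= /andP [yz zs].
  by rewrite -(IH z zs) /ascents /= -[rho y < rho z]/(lt_by y z) yz.
rewrite /hook_word ascents_desc //; case: X; last exact: ascents_asc.
by rewrite -(ascents_asc m R sR) /ascents /= ltnn.
Qed.

End HookShape.

Lemma hook_word_inj X L1 m1 R1 L2 m2 R2 :
  hook_shape L1 m1 R1 -> hook_shape L2 m2 R2 ->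
  hook_word X L1 m1 R1 = hook_word X L2 m2 R2 -> [/\ L1 = L2, m1 = m2 & R1 = R2].
Proof.
move=> sh1 sh2 e.
have mem_m L m R : m \in hook_word X L m R by rewrite mem_cat mem_head orbT.
have em : m1 = m2.
  have m21 : m2 \in hook_word X L1 m1 R1 by rewrite e mem_m.
  have m12 : m1 \in hook_word X L2 m2 R2 by rewrite -e mem_m.
  apply: rho_inj; apply/eqP.
  by rewrite eqn_leq (hook_shape_min sh1 m21) (hook_shape_min sh2 m12).
subst m2; have [mL1 _ _] := hook_shape_uniq sh1; have [mL2 _ _] := hook_shape_uniq sh2.
have eL : size L1 = size L2.
  by have := congr1 (index m1) e; rewrite !index_cat (negbTE mL1) (negbTE mL2) /= eqxx !addn0.
move/eqP: e; rewrite eqseq_cat // => /andP [/eqP -> /eqP].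
by case: X {mem_m} => -[] // ->.
Qed.

Lemma perm_move_left c s : c \in s -> perm_eq (move_left c s) s.
Proof.
by move=> cs; rewrite perm_sym (perm_trans (perm_to_rem cs)) // perm_sym perm_desc_insert.
Qed.

Lemma perm_move_right c s : c \in s -> perm_eq (move_right c s) s.
Proof.
by move=> cs; rewrite perm_sym (perm_trans (perm_to_rem cs)) // perm_sym perm_asc_insert.
Qed.

Section MoveHook.
Variables (X : htype) (m c : T).
Hypothesis m_lt_c : rho m < rho c.

Let m_neq_c : (m == c) = false.
Proof. by apply: negbTE; apply: contraTneq m_lt_c => ->; rewrite ltnn. Qed.

Lemma move_left_hook_word L R : c \notin L ->
  move_left c (hook_word X L m R) = hook_word X (desc_insert c L) m (rem c R).
Proof.
move=> cL; rewrite /move_left /hook_word rem_cat (negbTE cL) /= m_neq_c.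
by rewrite desc_insert_cat_lt //; case: X => //=; rewrite m_neq_c.
Qed.

Lemma move_right_hook_word L R : c \in L ->
  move_right c (hook_word X L m R) = hook_word X (rem c L) m (asc_insert c R).
Proof.
move=> cL; rewrite /move_right /hook_word rem_cat cL asc_insert_cat_lt //.
by case: X => //; rewrite (asc_insert_cat_lt [::]).
Qed.

Lemma hook_shape_move_left L R : c \notin L -> hook_shape L m R ->
  hook_shape (desc_insert c L) m (rem c R).
Proof.
move=> cL /andP [sL sR]; apply/andP; split.
  rewrite -cats1 -desc_insert_cat_lt // cats1 sorted_desc_insert //.
  by rewrite mem_rcons inE eq_sym m_neq_c.
have -> : m :: rem c R = rem c (m :: R) by rewrite /= m_neq_c.
exact: (subseq_sorted lt_by_trans (rem_subseq c _) sR).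
Qed.

Lemma hook_shape_move_right L R : c \notin R -> hook_shape L m R ->
  hook_shape (rem c L) m (asc_insert c R).
Proof.
move=> cR /andP [sL sR]; apply/andP; split.
  apply: (subseq_sorted gt_by_trans _ sL).
  by rewrite -!cats1 cat_subseq ?rem_subseq.
rewrite -[m :: _]/([::] ++ m :: _) -asc_insert_cat_lt // sorted_asc_insert //.
by rewrite inE eq_sym m_neq_c.
Qed.

Lemma move_right_left L R : hook_shape L m R -> c \notin L -> c \in R ->
  move_right c (move_left c (hook_word X L m R)) = hook_word X L m R.
Proof.
move=> shLR cL cR; have [_ sR] := hook_shape_sorted shLR.
rewrite move_left_hook_word // move_right_hook_word ?mem_desc_insert //.
by rewrite rem_desc_insert // asc_insert_rem.
Qed.

Lemma move_left_right L R : hook_shape L m R -> c \in L -> c \notin R ->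
  move_left c (move_right c (hook_word X L m R)) = hook_word X L m R.
Proof.
move=> shLR cL cR; have [sL _] := hook_shape_sorted shLR.
have [_ uL _] := hook_shape_uniq shLR.
rewrite move_right_hook_word // move_left_hook_word ?mem_rem_uniqF //.
by rewrite desc_insert_rem // rem_asc_insert.
Qed.

Lemma prod_move_left (S : pzSemiRingType) (f : T -> S) L R :
  hook_shape L m R -> c \notin L -> c \in R ->
  {in hook_word X L m R, forall x, rho x < rho c -> GRing.comm (f c) (f x)} ->
  (\prod_(x <- move_left c (hook_word X L m R)) f x = \prod_(x <- hook_word X L m R) f x)%R.
Proof.
move=> shLR cL cR comm_c; have [sL sR] := hook_shape_sorted shLR.
have [_ _ uR] := hook_shape_uniq shLR.
case/splitPr: cR uR sR comm_c => R1 R2 uR sR comm_c.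
have cR1 : c \notin R1 by move: uR; rewrite cat_uniq /= negb_or => /and3P [_ /andP []].
have R1_lt : all (lt_by^~ c) R1.
  move: sR; rewrite (sorted_pairwise lt_by_trans) pairwise_cat allrel_consr.
  by case/and3P=> /andP [].
rewrite move_left_hook_word // rem_cat (negbTE cR1) /= eqxx /desc_insert.
set n := find _ L; set B := drop n L ++ m :: (if X is HU then m :: R1 else R1).
have -> : hook_word X (take n L ++ c :: drop n L) m (R1 ++ R2) = take n L ++ c :: B ++ R2.
  by rewrite /B /hook_word; case: X; rewrite -!catA.
have eW : hook_word X L m (R1 ++ c :: R2) = take n L ++ B ++ c :: R2.
  by rewrite /B /hook_word -{1}(cat_take_drop n L) -!catA; case: X.
rewrite eW in comm_c *; apply: prod_comm_cat => x xB.
apply: comm_c; first by rewrite mem_cat (mem_cat x B) xB orbT.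
move: xB; rewrite mem_cat => /orP [/(drop_find_lt sL) //|].
have m_R1 y : y \in m :: R1 -> rho y < rho c by case/predU1P => [->|/(allP R1_lt)].
by case: X; last exact: m_R1; rewrite inE => /predU1P [-> //|]; exact: m_R1.
Qed.

End MoveHook.

End RankedSeq.

Section Words.
Variable k : nat.
Implicit Types (u v : word k) (c m x : 'I_k.+1) (L R : word k).

Lemma has_gap_pt u : proper_supp u -> has (fun n => n \notin map val u) (iota 0 k.+1).
Proof.
case/existsP=> x xu; apply/hasP; exists (val x); first by rewrite mem_iota ltn_ord.
by rewrite (mem_map val_inj).
Qed.

Lemma gap_pt_lt u : proper_supp u -> gap_pt u < k.+1.
Proof. by move/has_gap_pt; rewrite has_find size_iota. Qed.

Lemma rankE u x : proper_supp u -> rank u x = (val x + (k - gap_pt u)) %% k.+1.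
Proof. by move=> pu; rewrite /rank addnBA // -ltnS gap_pt_lt. Qed.

Lemma rank_inj u : proper_supp u -> injective (rank u).
Proof.
move=> pu x y; rewrite !rankE // => /eqP; rewrite eqn_modDr !modn_small ?ltn_ord //.
by move/eqP/val_inj.
Qed.

Lemma rank_ordS u x : proper_supp u -> rank u (ordS x) = (rank u x).+1 %% k.+1.
Proof.
move=> pu; rewrite !rankE //= modnDml.
by rewrite -[X in _ = X %% _]addn1 modnDml addn1 addSn.
Qed.

Lemma rank_mem_lt u x : proper_supp u -> x \in u -> rank u x < k.
Proof.
move=> pu xu; have gap_lt := gap_pt_lt pu; set g := Ordinal gap_lt.
have gu : g \notin u.
  have := nth_find 0 (has_gap_pt pu); rewrite nth_iota // add0n.
  by apply: contra => gu; apply: (map_f val gu).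
have : rank u x != rank u g by apply: contraNneq gu => /(rank_inj pu) <-.
rewrite [rank u g]rankE //= subnKC; last by rewrite -ltnS.
rewrite modn_small // => ne.
by rewrite ltn_neqAle ne -ltnS /rank ltn_mod.
Qed.

Lemma eq_gap_pt u v : u =i v -> gap_pt u = gap_pt v.
Proof.
move=> e; apply: eq_find => n /=; congr negb.
by apply/mapP/mapP => -[x xu ->]; exists x; rewrite // ?e // -e.
Qed.

Lemma eq_rank u v : u =i v -> rank u = rank v.
Proof. by move=> e; rewrite /rank (eq_gap_pt e). Qed.

Lemma eq_proper_supp u v : u =i v -> proper_supp u = proper_supp v.
Proof. by move=> e; apply: eq_existsb => x; rewrite e. Qed.

Lemma eq_kconnected u v : u =i v -> kconnected u = kconnected v.
Proof.
move=> e; rewrite /kconnected /ltI (eq_rank e).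
by do 3!apply: eq_forallb => ?; rewrite !e.
Qed.

Lemma eq_gap_top u v : u =i v -> gap_top u =1 gap_top v.
Proof.
move=> e c; rewrite /gap_top /ltI (eq_rank e) e; congr andb.
by apply: eq_existsb => a; rewrite e; do 3!congr andb; apply: eq_forallb => b; rewrite e.
Qed.

Lemma eq_is_umin u v : u =i v -> is_umin u =1 is_umin v.
Proof.
move=> e c; rewrite /is_umin (eq_gap_top e) (eq_rank e); congr andb.
by apply: eq_forallb => c'; rewrite (eq_gap_top e).
Qed.

Lemma perm_kweak_connected u v : perm_eq u v -> kweak_connected u -> kweak_connected v.
Proof.
move=> p; have e := perm_mem p; rewrite /kweak_connected (eq_kconnected e).
by case=> [|[c]]; [left | rewrite (eq_is_umin e) (permP p); right; exists c].
Qed.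

Lemma gap_top_exists u : proper_supp u -> ~~ kconnected u -> exists c, gap_top u c.
Proof.
move=> pu /forallPn [x /forallPn [y /forallPn [z]]].
rewrite negb_imply => /andP [/and4P [xu zu xy yz] yu].
pose above c := (c \in u) && (rank u y < rank u c).
pose below a := (a \in u) && (rank u a < rank u y).
have [|c /andP [cu yc] c_min] := @arg_minnP _ z above (rank u); first by rewrite /above zu.
have [|a /andP [au ay] a_max] := @arg_maxnP _ x below (rank u); first by rewrite /below xu.
exists c; rewrite /gap_top cu; apply/existsP; exists a.
rewrite au /ltI (ltn_trans ay yc) /=; apply/andP; split.
  apply: contraTneq yc => e; have -> : c = ordS a by apply: val_inj.
  rewrite (rank_ordS a pu) modn_small; last by rewrite ltnS rank_mem_lt.
  by rewrite ltnS -ltnNge.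
apply/forallP => b; apply/implyP => bu; apply/negP => /andP [ab bc].
case: (ltngtP (rank u b) (rank u y)) => [by_|yb|/(rank_inj pu) eb].
- by have := a_max b; rewrite /below bu by_ => /(_ isT); rewrite /= leqNgt ab.
- by have := c_min b; rewrite /above bu yb => /(_ isT); rewrite leqNgt bc.
- by rewrite -eb bu in yu.
Qed.

Lemma umin_exists u : proper_supp u -> ~~ kconnected u -> exists c, is_umin u c.
Proof.
move=> pu /(gap_top_exists pu) [c gc].
have [c' gc' c'_min] := arg_minnP (rank u) gc.
by exists c'; rewrite /is_umin gc'; apply/forallP => d; apply/implyP; apply: c'_min.
Qed.

Lemma umin_unique u c c' : proper_supp u -> is_umin u c -> is_umin u c' -> c = c'.
Proof.
move=> pu /andP [gc /forallP c_min] /andP [gc' /forallP c'_min].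
apply: (rank_inj pu); apply/eqP.
by rewrite eqn_leq (implyP (c_min c') gc') (implyP (c'_min c) gc).
Qed.

Lemma umin_below u c : is_umin u c -> c \in u /\ exists2 a, a \in u & rank u a < rank u c.
Proof. by case/andP=> /andP [cu /existsP [a /and4P [au ac _ _]]] _; split=> //; exists a. Qed.

Lemma umin_commute u c x : proper_supp u -> is_umin u c -> x \in u ->
  rank u x < rank u c -> x != ordS c /\ c != ordS x.
Proof.
move=> pu /andP [/andP [cu /existsP [a /and4P [au ac a_gap /forallP a_next]]] _] xu xc.
have ck := rank_mem_lt pu cu; have xk := rank_mem_lt pu xu.
split; apply/eqP => e.
  by have := rank_ordS c pu; rewrite -e modn_small //; lia.
have x_succ := rank_ordS x pu; rewrite -e modn_small // in x_succ.
have ax : a = x.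
  apply: (rank_inj pu); move: (a_next x) ac; rewrite xu /ltI x_succ ltnSn andbT /=.
  lia.
by move: a_gap; rewrite e ax eqxx.
Qed.

Lemma hook_at_word X u j : hook_at X u j -> exists L m R,
  [/\ u = hook_word X L m R, hook_shape (rank u) L m R,
      left_side u j = rcons L m & right_side X u j = m :: R].
Proof.
move=> hj; have [j_pos j_size] : 0 < j /\ j.-1 < size u.
  by case: X hj => /andP [/andP [j0 js] _]; split; rewrite // prednK // ltnW.
set L := take j.-1 u; set m := nth ord0 u j.-1.
have eTake : take j u = rcons L m by rewrite -take_nth // prednK.
have eDrop : drop j.-1 u = m :: drop j u by rewrite (drop_nth ord0) // prednK.
case: X hj => /=.
  case/and4P=> /andP [_ js] sL /eqP em sR.
  have eDrop' : drop j u = m :: drop j.+1 u by rewrite (drop_nth ord0) // -em.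
  exists L, m, (drop j.+1 u); rewrite /hook_shape /hook_word -eTake -eDrop' -eDrop.
  by rewrite cat_take_drop sL sR.
case/and3P=> _ sL sR; exists L, m, (drop j u).
by rewrite /hook_shape /hook_word -eTake -eDrop cat_take_drop sL sR.
Qed.

Lemma hook_word_at X u L m R : u = hook_word X L m R -> hook_shape (rank u) L m R ->
  [/\ hook_at X u (size L).+1, left_side u (size L).+1 = rcons L m
     & right_side X u (size L).+1 = m :: R].
Proof.
move=> eu /andP [sL sR].
have eTake : take (size L).+1 u = rcons L m.
  by rewrite eu /hook_word -cat_rcons take_size_cat ?size_rcons.
have eDrop : drop (size L) u = m :: (if X is HU then m :: R else R).
  by rewrite eu /hook_word drop_size_cat.
have eDrop' : drop (size L).+1 u = if X is HU then m :: R else R.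
  by rewrite -(add1n (size L)) -drop_drop eDrop /= drop0.
have size_u : size u = size L + (if X is HU then 2 else 1) + size R.
  by rewrite eu /hook_word size_cat; case: (X) => /=; lia.
have nth_u i : nth ord0 u (size L + i) = nth ord0 (m :: (if X is HU then m :: R else R)) i.
  by rewrite -eDrop nth_drop.
rewrite /left_side eTake; case: X eDrop eDrop' size_u nth_u {eu} => /= eDrop eDrop' size_u nth_u.
  have := nth_u 0; have := nth_u 1; rewrite addn0 addn1 /= => -> ->.
  rewrite eTake eDrop' size_u; split=> //; apply/and4P; split=> //; lia.
rewrite eTake eDrop size_u; split=> //; apply/and3P; split=> //; lia.
Qed.

Definition umin_hook X u c L m R : Prop :=
  [/\ proper_supp u, ~ kweak_connected u, is_umin u c,
      u = hook_word X L m R & hook_shape (rank u) L m R].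

Lemma umin_hook_side X u c L m R : umin_hook X u c L m R ->
  rank u m < rank u c /\ (c \in L) = (c \notin R).
Proof.
move=> [pu nkw uc eu sh]; have [cu [a au ac]] := umin_below uc.
have mc : rank u m < rank u c.
  by apply: leq_ltn_trans ac; apply: (hook_shape_min (X := X) sh); rewrite -eu.
split=> //; have cm : c != m by apply: contraTneq mc => ->; rewrite ltnn.
have count_c := count_hook_word X sh cm; rewrite -eu in count_c.
have c_once : count_mem c u != 2 by apply: contra_not_neq nkw => c2; right; exists c.
move: cu c_once; rewrite -has_pred1 has_count count_c.
by case: (c \in L); case: (c \in R).
Qed.

Lemma umin_hook_perm X u v c L m R L' R' : umin_hook X u c L m R -> perm_eq v u ->
  v = hook_word X L' m R' -> hook_shape (rank u) L' m R' -> umin_hook X v c L' m R'.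
Proof.
move=> [pu nkw uc _ _] vu ev sh; have e := perm_mem vu.
split; rewrite ?(eq_proper_supp e) ?(eq_is_umin e) ?(eq_rank e) //.
by move/(perm_kweak_connected vu).
Qed.

Lemma asc_hook_word X u L m R :
  u = hook_word X L m R -> hook_shape (rank u) L m R -> asc u = size R.
Proof. by move=> eu sh; rewrite -(ascents_hook_word X sh) -eu. Qed.

Lemma Xset_hook_word X u L m R : proper_supp u ->
  u = hook_word X L m R -> hook_shape (rank u) L m R -> Xset X (size u) (size R) u.
Proof.
move=> pu eu sh; have [hj _ _] := hook_word_at eu sh.
by split; rewrite ?(asc_hook_word eu sh) //; split=> //; exists (size L).+1.
Qed.

Lemma umin_hook_Xleft X u c L m R : umin_hook X u c L m R -> c \in L ->
  Xleft X (size u) (size R) u.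
Proof.
move=> [pu nkw uc eu sh] cL; have [hj hl _] := hook_word_at eu sh.
split=> //; first exact: Xset_hook_word pu eu sh.
by exists c, (size L).+1; rewrite hl mem_rcons inE cL orbT.
Qed.

Lemma umin_hook_Xright X u c L m R : umin_hook X u c L m R -> c \in R ->
  Xright X (size u) (size R) u.
Proof.
move=> [pu nkw uc eu sh] cR; have [hj _ hr] := hook_word_at eu sh.
split=> //; first exact: Xset_hook_word pu eu sh.
by exists c, (size L).+1; rewrite hr inE cR orbT.
Qed.

Lemma Xset_umin_hook X r i u c j : Xset X r i u -> ~ kweak_connected u ->
  is_umin u c -> hook_at X u j -> exists L m R,
  [/\ umin_hook X u c L m R, left_side u j = rcons L m, right_side X u j = m :: R,
      size u = r & Posz (size R) = i].
Proof.
move=> [su [pu _] <-] nkw uc /hook_at_word [L [m [R [eu sh hl hr]]]].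
by exists L, m, R; rewrite (asc_hook_word eu sh).
Qed.

Lemma Xleft_umin_hook X r i u : Xleft X r i u -> exists c L m R,
  [/\ umin_hook X u c L m R, c \in L, size u = r & Posz (size R) = i].
Proof.
case=> xs nkw [c [j [uc hj cl]]].
have [L [m [R [h hl _ su si]]]] := Xset_umin_hook xs nkw uc hj.
have [mc _] := umin_hook_side h; have cm : c != m by apply: contraTneq mc => ->; rewrite ltnn.
by exists c, L, m, R; move: cl; rewrite hl mem_rcons inE (negbTE cm).
Qed.

Lemma Xright_umin_hook X r i u : Xright X r i u -> exists c L m R,
  [/\ umin_hook X u c L m R, c \in R, size u = r & Posz (size R) = i].
Proof.
case=> xs nkw [c [j [uc hj cr]]].
have [L [m [R [h _ hr su si]]]] := Xset_umin_hook xs nkw uc hj.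
have [mc _] := umin_hook_side h; have cm : c != m by apply: contraTneq mc => ->; rewrite ltnn.
by exists c, L, m, R; move: cr; rewrite hr inE (negbTE cm).
Qed.

Definition umin_of u := [pick c | is_umin u c].
Definition umin_to_left u := if umin_of u is Some c then move_left (rank u) c u else u.
Definition umin_to_right u := if umin_of u is Some c then move_right (rank u) c u else u.

Lemma umin_ofE u c : proper_supp u -> is_umin u c -> umin_of u = Some c.
Proof.
move=> pu uc; rewrite /umin_of; case: pickP => [c' uc'|/(_ c)]; last by rewrite uc.
by rewrite (umin_unique pu uc' uc).
Qed.

Lemma umin_to_left_hook X u c L m R : umin_hook X u c L m R -> c \in R ->
  [/\ umin_to_left u = move_left (rank u) c u, perm_eq (umin_to_left u) u
    & umin_hook X (umin_to_left u) c (desc_insert (rank u) c L) m (rem c R)].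
Proof.
move=> h cR; have [mc cLR] := umin_hook_side h; have cL : c \notin L by rewrite cLR cR.
have [pu _ uc eu sh] := h.
have ev : umin_to_left u = move_left (rank u) c u by rewrite /umin_to_left (umin_ofE pu uc).
have vu : perm_eq (umin_to_left u) u by rewrite ev perm_move_left // (umin_below uc).1.
split=> //; apply: umin_hook_perm h vu _ _.
  by rewrite ev {2}eu move_left_hook_word.
exact: (hook_shape_move_left (rank_inj pu) mc cL sh).
Qed.

Lemma umin_to_right_hook X u c L m R : umin_hook X u c L m R -> c \in L ->
  [/\ umin_to_right u = move_right (rank u) c u, perm_eq (umin_to_right u) u
    & umin_hook X (umin_to_right u) c (rem c L) m (asc_insert (rank u) c R)].
Proof.
move=> h cL; have [mc cLR] := umin_hook_side h; have cR : c \notin R by rewrite -cLR.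
have [pu _ uc eu sh] := h.
have ev : umin_to_right u = move_right (rank u) c u by rewrite /umin_to_right (umin_ofE pu uc).
have vu : perm_eq (umin_to_right u) u by rewrite ev perm_move_right // (umin_below uc).1.
split=> //; apply: umin_hook_perm h vu _ _.
  by rewrite ev {2}eu move_right_hook_word.
exact: (hook_shape_move_right (rank_inj pu) mc cR sh).
Qed.

Lemma Ak_eq_umin_to_left X u c L m R : umin_hook X u c L m R -> c \in R ->
  Ak_eq u (umin_to_left u).
Proof.
move=> h cR S a [_ a_comm]; have [ev _ _] := umin_to_left_hook h cR.
have [mc cLR] := umin_hook_side h; have cL : c \notin L by rewrite cLR cR.
have [pu _ uc eu sh] := h; rewrite ev; symmetry.
have := prod_move_left (X := X) (f := a) mc sh cL cR; rewrite -eu; apply.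
move=> x xu xc; have [xc' cx] := umin_commute pu uc xu xc.
exact: a_comm.
Qed.

Lemma umin_to_right_left X u c L m R : umin_hook X u c L m R -> c \in R ->
  umin_to_right (umin_to_left u) = u.
Proof.
move=> h cR; have [ev vu [pv _ vc _ _]] := umin_to_left_hook h cR.
have [mc cLR] := umin_hook_side h; have cL : c \notin L by rewrite cLR cR.
have [pu _ uc eu sh] := h.
rewrite /umin_to_right (umin_ofE pv vc) (eq_rank (perm_mem vu)) ev.
by have := move_right_left (rank_inj pu) X mc sh cL cR; rewrite -eu.
Qed.

Lemma umin_to_left_right X u c L m R : umin_hook X u c L m R -> c \in L ->
  umin_to_left (umin_to_right u) = u.
Proof.
move=> h cL; have [ev vu [pv _ vc _ _]] := umin_to_right_hook h cL.
have [mc cLR] := umin_hook_side h; have cR : c \notin R by rewrite -cLR.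
have [pu _ uc eu sh] := h.
rewrite /umin_to_left (umin_ofE pv vc) (eq_rank (perm_mem vu)) ev.
by have := move_left_right (rank_inj pu) X mc sh cL cR; rewrite -eu.
Qed.

Lemma Xright_to_left X r i u : Xright X r i u ->
  [/\ Xleft X r (i - 1) (umin_to_left u), Ak_eq u (umin_to_left u)
    & umin_to_right (umin_to_left u) = u].
Proof.
case/Xright_umin_hook=> c [L [m [R [h cR <- <-]]]].
have [_ vu hv] := umin_to_left_hook h cR.
split; [|exact: Ak_eq_umin_to_left h cR|exact: umin_to_right_left h cR].
have R_pos : 0 < size R by case: (R) cR.
have := umin_hook_Xleft hv (mem_desc_insert _ _ _).
by rewrite (perm_size vu) size_rem // predn_int.
Qed.

Lemma Xleft_to_right X r i u : Xleft X r (i - 1) u ->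
  Xright X r i (umin_to_right u) /\ umin_to_left (umin_to_right u) = u.
Proof.
case/Xleft_umin_hook=> c [L [m [R [h cL <- si]]]].
have [_ vu hv] := umin_to_right_hook h cL.
split; last exact: umin_to_left_right h cL.
have := umin_hook_Xright hv (mem_asc_insert _ _ _).
rewrite (perm_size vu) (perm_size (perm_asc_insert _ _ _)).
by have -> : Posz (size R).+1 = i by rewrite -addn1 PoszD si subrK.
Qed.

Lemma Xset_partition X r i u :
  Xset X r i u <-> [\/ Xwc X r i u, Xleft X r i u | Xright X r i u].
Proof.
split; last by case=> -[].
move=> xs; have [_ [pu [j hj]] _] := xs.
have [kc|nkc] := boolP (kconnected u); first by constructor 1; split=> //; left.
have [c uc] := umin_exists pu nkc.
have [c2|c_once] := eqVneq (count_mem c u) 2.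
  by constructor 1; split=> //; right; exists c.
have nkw : ~ kweak_connected u.
  case=> [kc|[c' [uc' c'2]]]; first by rewrite kc in nkc.
  by move/eqP: c_once; rewrite -(umin_unique pu uc' uc) c'2.
have [L [m [R [h _ _ <- <-]]]] := Xset_umin_hook xs nkw uc hj.
have [_ cLR] := umin_hook_side h.
case cL: (c \in L); first by constructor 2; exact: umin_hook_Xleft h cL.
by constructor 3; apply: (umin_hook_Xright h); rewrite -[c \in R]negbK -cLR cL.
Qed.

Lemma Xleft_Xright_disjoint X r i u : Xleft X r i u -> ~ Xright X r i u.
Proof.
case/Xleft_umin_hook=> c [L [m [R [h cL _ _]]]].
case/Xright_umin_hook=> c' [L' [m' [R' [[_ _ uc' eu' sh'] cR' _ _]]]].
have [pu _ uc eu sh] := h; have [_ cLR] := umin_hook_side h.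
have ec := umin_unique pu uc uc'; subst c'.
have [eL _ eR] := hook_word_inj (rank_inj pu) sh sh' (etrans (esym eu) eu').
by subst L' R'; rewrite cLR cR' in cL.
Qed.

Lemma Xright0_empty X r u : ~ Xright X r 0 u.
Proof. by case/Xright_umin_hook=> c [L [m [R [_ cR _ R0]]]]; case: R cR R0. Qed.

Lemma Xleft_asc_bound X r i u : Xleft X r i u ->
  (i + (if X is HU then 3 else 2) <= Posz r)%R.
Proof.
case/Xleft_umin_hook=> c [L [m [R [[_ _ _ eu _] cL <- <-]]]].
have L_pos : 0 < size L by case: (L) cL.
by rewrite eu /hook_word size_cat; case: (X) => /=; lia.
Qed.

Lemma Xset_asc_ge0 X r i u : Xset X r i u -> (0 <= i)%R.
Proof. by case=> _ _ <-. Qed.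

End Words.

Theorem lemma5p3 (k : nat) (X : htype) (r : nat) (i : int) :
  [/\ (* 1. disjoint union *)
      (forall u : word k,
         Xset X r i u <-> [\/ Xwc X r i u, Xleft X r i u | Xright X r i u]) /\
      (forall u : word k,
         ~ (Xwc X r i u /\ Xleft X r i u) /\
         ~ (Xwc X r i u /\ Xright X r i u) /\
         ~ (Xleft X r i u /\ Xright X r i u)),
      (* 2. value-preserving bijection right_i -> left_{i-1} *)
      (exists f g : word k -> word k,
         [/\ forall u, Xright X r i u -> Xleft X r (i - 1)%R (f u) /\ Ak_eq u (f u),
             forall v, Xleft X r (i - 1)%R v -> Xright X r i (g v),
             forall u, Xright X r i u -> g (f u) = u
           & forall v, Xleft X r (i - 1)%R v -> f (g v) = v]) &
      (* 3. empty sets *)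
      [/\ forall u : word k, ~ Xright X r 0 u,
          forall u : word k, ~ Xleft HV r (Posz r - 1)%R u,
          forall u : word k, ~ Xleft HU r (Posz r - 2)%R u
        & (i < 0)%R -> forall u : word k, ~ Xset X r i u]].
Proof.
split.
- split=> u; first exact: Xset_partition.
  split; first by case=> -[_ wc] [_ nwc _].
  split; first by case=> -[_ wc] [_ nwc _].
  by case=> /Xleft_Xright_disjoint.
- exists (@umin_to_left k), (@umin_to_right k); split.
  + by move=> u /Xright_to_left [].
  + by move=> v /Xleft_to_right [].
  + by move=> u /Xright_to_left [].
  + by move=> v /Xleft_to_right [].
- split=> [u|u /Xleft_asc_bound|u /Xleft_asc_bound|i_neg u /Xset_asc_ge0]; try lia.
  exact: Xright0_empty.
Qed.
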